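(* Let $M$ be a victim GNN and $I$ an independently trained GNN. Suppose that for both $F\in\{M,I\}$ the embeddings $\mathbf{h}_i(G,X;F)$ are twice-differentiable in $X$ with bounded Hessian and satisfy $0<\underline{\alpha}_F\le\|\mathbf{h}_i(G,X;F)\|\le\overline{\alpha}_F$ for all feasible $G,X,i$. Suppose $\mathcal{S}(M)$ carries a probability measure $\mu_M$ and there exists $\gamma_M>0$ with $\mu_M(\mathcal{S}(M)\setminus\mathcal{S}(I))\ge\gamma_M$ for every independently trained model $I$. Suppose further that $\mathbb{E}_{t\sim\mu_M}[q_I(t)\mid t\notin\mathcal{S}(I)]=\mathbb{E}_{t\sim\mathcal{D}_{\exp}}[q_I(t)]$. Then for $\delta$ small enough, $\beta_I\ge\gamma_M+O(\delta)$.
   Context: A graph is $(G,X)$, $G=(V,E)$ with $n$ nodes, features $\mathbf{x}_i\in\mathbb{R}^D$, $X=(\mathbf{x}_1,\dots,\mathbf{x}_n)$; $\mathcal{D}$ is a distribution over feasible $(G,X)$. A GNN $F$ maps $(G,X)$ to node embeddings $\mathbf{h}_i(G,X;F)$. Query tuples: $\mathcal{Q}=\{(G,X,i,\mathbf{w}) : (G,X)\in\mathrm{supp}(\mathcal{D}), i\in\{1,\dots,n\}, \mathbf{w}\in\mathbb{R}^D,\|\mathbf{w}\|=1\}$. $\mathbf{h}_i^{(\tau\mathbf{w})}(G,X;F)$ is the embedding of node $i$ after replacing $\mathbf{x}_i$ by $\mathbf{x}_i+\tau\mathbf{w}$; $\nabla_{\mathbf{w}}\mathbf{h}_i=\lim_{\tau\to0}(\mathbf{h}_i^{(\tau\mathbf{w})}-\mathbf{h}_i)/\tau$;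 stationary points $\mathcal{S}(F)=\{t\in\mathcal{Q}:\|\nabla_{\mathbf{w}}\mathbf{h}_i(G,X;F)\|=0\}$. $\mathcal{D}_{\exp}$: $(G,X)\sim\mathcal{D}$, $i$ uniform on $\{1,\dots,n\}$, $\mathbf{w}$ uniform on the unit sphere of $\mathbb{R}^D$. For $t\in\mathcal{Q}$ and $\delta>0$: $q_F(t)=\|\mathbf{h}_i^{(\delta\mathbf{w})}(G,X;F)-\mathbf{h}_i(G,X;F)\|/\|\mathbf{h}_i(G,X;F)\|$ and $\beta_F=\mathbb{E}_{t\sim\mu_M}q_F(t)/\mathbb{E}_{t\sim\mathcal{D}_{\exp}}q_F(t)$. *)

From HB Require Import structures.
From mathcomp Require Import all_boot all_order all_algebra.
From mathcomp Require Import all_classical all_reals all_analysis.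
Import numFieldNormedType.Exports.
Import Order.TTheory GRing.Theory Num.Theory.

Set Implicit Arguments.
Unset Strict Implicit.
Unset Printing Implicit Defensive.

Local Open Scope ring_scope.
Local Open Scope classical_set_scope.

Record graph := Graph { nv : nat; adj : rel 'I_nv }.

Section GNNDefs.
Variable R : realType.
Variable D : nat.
Variable k : nat.

Record gxpair := GXP { gG : graph; gX : 'M[R]_(nv gG, D) }.

Record query := Query
  { qG : graph; qX : 'M[R]_(nv qG, D); qi : 'I_(nv qG); qw : 'rV[R]_D }.

(* Technical: inhabited types with (classical) choice, needed to put
   sigma-algebras on them. *)
HB.instance Definition _ := gen_eqMixin gxpair.
HB.instance Definition _ := gen_choiceMixin gxpair.
HB.instance Definition _ :=
  isPointed.Build gxpair (@GXP (@Graph 0 (fun _ _ => false)) 0).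
HB.instance Definition _ := gen_eqMixin query.
HB.instance Definition _ := gen_choiceMixin query.
HB.instance Definition _ :=
  isPointed.Build query (@Query (@Graph 1 (fun _ _ => false)) 0 ord0 0).

Definition gnn := forall G : graph, 'M[R]_(nv G, D) -> 'I_(nv G) -> 'rV[R]_k.

Definition fro (m n : nat) (A : 'M[R]_(m, n)) : R :=
  Num.sqrt (\sum_(a < m) \sum_(b < n) A a b ^+ 2).

Definition pert_mx (n : nat) (i : 'I_n) (w : 'rV[R]_D) : 'M[R]_(n, D) :=
  \matrix_(a < n, b < D) (if a == i then w 0 b else 0).

Definition hemb (F : gnn) (t : query) : 'rV[R]_k := F (qG t) (qX t) (qi t).

(* h_i^{(tau w)}(G,X;F): x_i replaced by x_i + tau w *)
Definition hpert (F : gnn) (tau : R) (t : query) : 'rV[R]_k :=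
  F (qG t) (qX t + tau *: pert_mx (qi t) (qw t)) (qi t).

Definition grad_w (F : gnn) (t : query) : 'rV[R]_k :=
  'D_(pert_mx (qi t) (qw t)) (fun X => F (qG t) X (qi t)) (qX t).

Definition Qset (Feas : set gxpair) : set query :=
  [set t | Feas (@GXP (qG t) (qX t)) /\ fro (qw t) = 1].

Definition stat (Feas : set gxpair) (F : gnn) : set query :=
  [set t | Qset Feas t /\ fro (grad_w F t) = 0].

Definition qF (F : gnn) (delta : R) (t : query) : R :=
  fro (hpert F delta t - hemb F t) / fro (hemb F t).

Definition BorelRV := g_sigma_algebraType (@open 'rV[R]_D).

Definition unif_sphere (sig : probability BorelRV R) : Prop :=
  sig [set w : BorelRV | fro w = 1] = 1%E /\
  forall U : 'M[R]_D, U *m U^T = 1%:M ->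
    forall A : set BorelRV, measurable A ->
      sig ((fun w : BorelRV => (w *m U : BorelRV)) @^-1` A) = sig A.

Definition Emu (GQ : set (set query)) (mu : probability (g_sigma_algebraType GQ) R)
  (f : query -> R) : \bar R := (\int[mu]_t (f t)%:E)%E.

Definition Econd (GQ : set (set query)) (mu : probability (g_sigma_algebraType GQ) R)
  (A : set query) (f : query -> R) : \bar R :=
  ((\int[mu]_(t in A) (f t)%:E) * ((fine (mu A))^-1)%:E)%E.

(* E_{t ~ D_exp}[f(t)]: (G,X) ~ Dd, i uniform on the nodes, w ~ sig. *)
Definition Eexp (GX : set (set gxpair)) (Dd : probability (g_sigma_algebraType GX) R)
  (sig : probability BorelRV R) (f : query -> R) : \bar R :=
  (\int[Dd]_p (((nv (gG p))%:R^-1)%:E *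
     \sum_(i < nv (gG p)) \int[sig]_w (f (@Query (gG p) (gX p) i w))%:E))%E.

Definition beta (GQ : set (set query)) (mu : probability (g_sigma_algebraType GQ) R)
  (GX : set (set gxpair)) (Dd : probability (g_sigma_algebraType GX) R)
  (sig : probability BorelRV R) (F : gnn) (delta : R) : \bar R :=
  (Emu mu (qF F delta) * ((fine (Eexp Dd sig (qF F delta)))^-1)%:E)%E.

Definition C2_bounded_hessian (Feas : set gxpair) (F : gnn) : Prop :=
  exists B : R, forall p : gxpair, Feas p -> forall i : 'I_(nv (gG p)),
    let f := fun X : 'M[R]_(nv (gG p), D) => F (gG p) X i in
    (forall X, differentiable f X) /\
    (forall v X, differentiable ('D_v f) X) /\
    (forall X u v, fro ('D_u ('D_v f) X) <= B * fro u * fro v).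

Definition norm_bounded (Feas : set gxpair) (F : gnn) : Prop :=
  exists alo ahi : R, 0 < alo /\
    forall p : gxpair, Feas p -> forall i : 'I_(nv (gG p)),
      alo <= fro (F (gG p) (gX p) i) <= ahi.

End GNNDefs.

From mathcomp Require Import all_boot all_order all_algebra.
From mathcomp Require Import all_classical all_reals all_analysis.
From mathcomp Require Import measurable_realfun.
Import numFieldNormedType.Exports.
Import Order.TTheory GRing.Theory Num.Theory.
Local Open Scope ring_scope.
Local Open Scope classical_set_scope.

(* Split E_mu[q_I] over S(I) and its complement A. Dropping the nonnegative
   contribution of S(I) and using E_mu[q_I | A] = E_exp[q_I] gives
   beta_I >= mu(A) >= mu(S(M) \ S(I)) >= gamma_M for every delta > 0, so the
   bound holds with C = 0. *)

Lemma qF_ge0 (R : realType) (D k : nat) (F : gnn R D k) (delta : R)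
  (t : query R D) : 0 <= qF F delta t.
Proof. by rewrite /qF /fro divr_ge0 // sqrtr_ge0. Qed.

Section ConditionalExpectation.
Variables (R : realType) (D : nat) (GQ : set (set (query R D))).
Variable mu : probability (g_sigma_algebraType GQ) R.
Local Open Scope ereal_scope.

Lemma integral_setE_Econd (A : set (g_sigma_algebraType GQ)) (f : query R D -> R) :
  measurable A -> 0 < mu A ->
  \int[mu]_(t in A) (f t)%:E = Econd mu A f * mu A.
Proof.
move=> mA muA_gt0.
have muAE : mu A = (fine (mu A))%:E by rewrite fineK // fin_num_measure.
have fmuA_neq0 : fine (mu A) != 0%R by rewrite gt_eqF // -lte_fin -muAE.
by rewrite /Econd {2}muAE -muleA -EFinM mulVf // mule1.
Qed.

Lemma measure_le_Emu_div_Econd (A : set (g_sigma_algebraType GQ))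
  (f : query R D -> R) (e : R) :
  measurable A -> measurable_fun [set: g_sigma_algebraType GQ] f ->
  (forall t, (0 <= f t)%R) ->
  0 < mu A -> (0 < e)%R -> Econd mu A f = e%:E ->
  mu A <= Emu mu f * (e^-1)%:E.
Proof.
move=> mA mf f_ge0 muA_gt0 e_gt0 condE.
have int_le_Emu : e%:E * mu A <= Emu mu f.
  rewrite -condE -integral_setE_Econd // /Emu.
  apply: ge0_subset_integral => //; first exact/measurable_EFinP.
  by move=> t _; rewrite lee_fin.
have einv_ge0 : 0 <= (e^-1)%:E by rewrite lee_fin invr_ge0 ltW.
apply: le_trans (lee_wpmul2r einv_ge0 int_le_Emu).
by rewrite muleAC -EFinM mulfV ?gt_eqF // mul1e.
Qed.

End ConditionalExpectation.

Theorem lemma4 (R : realType) (D k : nat)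
  (GX : set (set (gxpair R D)))
  (Dd : probability (g_sigma_algebraType GX) R)
  (Feas : set (gxpair R D))
  (hFeas_meas : measurable (Feas : set (g_sigma_algebraType GX)))
  (hFeas_full : Dd Feas = 1%E)
  (sig : probability (BorelRV R D) R) (hsig : unif_sphere sig)
  (GQ : set (set (query R D)))
  (mu : probability (g_sigma_algebraType GQ) R)
  (indep : gnn R D k -> Prop) (M I : gnn R D k) (hI : indep I)
  (hregM : C2_bounded_hessian Feas M) (hregI : C2_bounded_hessian Feas I)
  (hnormM : norm_bounded Feas M) (hnormI : norm_bounded Feas I)
  (hSM_meas : measurable (stat Feas M : set (g_sigma_algebraType GQ)))
  (hmu_SM : mu (stat Feas M) = 1%E)
  (hSI_meas : measurable (stat Feas I : set (g_sigma_algebraType GQ)))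
  (gamma : R) (hgamma : 0 < gamma)
  (hgap : forall J : gnn R D k, indep J ->
     (gamma%:E <= mu (stat Feas M `\` stat Feas J))%E)
  (hq_meas : forall delta : R, 0 < delta ->
     measurable_fun [set: g_sigma_algebraType GQ] (qF I delta))
  (hEexp : forall delta : R, 0 < delta ->
     (0 < Eexp Dd sig (qF I delta) < +oo)%E)
  (hcond : forall delta : R, 0 < delta ->
     Econd mu (~` stat Feas I) (qF I delta) = Eexp Dd sig (qF I delta)) :
  exists C delta0 : R, 0 < delta0 /\
    forall delta : R, 0 < delta < delta0 ->
      ((gamma - C * delta)%:E <= beta mu Dd sig I delta)%E.
Proof.
exists 0, 1; split => // delta /andP[delta_gt0 _].
rewrite mul0r subr0.
set A : set (g_sigma_algebraType GQ) := ~` stat Feas I.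
have mA : measurable A := measurableC hSI_meas.
have gamma_le_muA : (gamma%:E <= mu A)%E.
  apply: le_trans (hgap I hI) _.
  apply: le_measure; rewrite ?inE //; first exact: measurableD.
have /andP[Eexp_gt0 Eexp_ltoo] := hEexp delta delta_gt0.
have EexpE : Eexp Dd sig (qF I delta) = (fine (Eexp Dd sig (qF I delta)))%:E.
  by rewrite fineK // ge0_fin_numE // ltW.
apply: (le_trans gamma_le_muA); rewrite /beta.
apply: measure_le_Emu_div_Econd => //.
- exact: hq_meas.
- exact: qF_ge0.
- exact: lt_le_trans gamma_le_muA.
- by rewrite -lte_fin -EexpE.
- by rewrite -EexpE; exact: hcond.
Qed.
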